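(* Let $d\in\mathbb N$, $\beta\in(1,\infty)$, $\theta\in[1,\infty]$, and let $K_r$ be as in the context. Then, with implicit constant independent of $r$, $$\|K_r\|_{\mathrm L^\theta(\mathbb R^{1+2d})}\lesssim r^{\mathsf Q(\frac1\theta-1)}\qquad\text{for all }r>0.$$
   Context: All $2\times2$ matrices act on $\mathbb R^{2d}$ as their tensor product with $\mathrm{Id}_d$. Let $g_1(r)=r^\beta\sin\log r$, $g_2(r)=r^\beta\cos\log r$, $\mathcal W(r)=\begin{pmatrix}g_1&g_2\\ \dot g_1&\dot g_2\end{pmatrix}(r)$, $\mathcal D_\delta=\mathrm{diag}(\mathrm{Id}_d,\delta\,\mathrm{Id}_d)$, $\mathcal A_{m_0}(r)=\mathcal D_{m_0}^{-1}\mathcal W(r)$ for $m_0\ne0$. Let $c_0:=(-1)^d$ and $\mathsf Q:=(2\beta-1)d+1$. Fix a nonnegative $\psi\in C_c^\infty(\mathbb R^{1+2d})$ with unit mass and support in $(-2,-1)\times B_1(0)\times B_1(0)$. For $r>0$, $$K_r(u_0,u_1,u_2)=c_0^{-1}r^{-\mathsf Q}\Bigl(\frac{u_0}{r}\Bigr)^d\psi\Bigl(\frac{u_0}{r},\mathcal A_{u_0/r}(r)^{-1}\binom{u_1}{u_2}\Bigr)$$ (set to $0$ when $u_0=0$). *)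

From HB Require Import structures.
From mathcomp Require Import all_boot all_order all_algebra.
From mathcomp Require Import all_classical all_reals all_analysis.
From mathcomp Require Import lebesgue_integral_fubini.
Set Implicit Arguments. Unset Strict Implicit. Unset Printing Implicit Defensive.
Import Order.TTheory GRing.Theory Num.Theory.
Import numFieldNormedType.Exports.
Local Open Scope classical_set_scope.
Local Open Scope ring_scope.

Record msp (R : realType) := MSp {
  msp_disp : measure_display;
  msp_T : measurableType msp_disp;
  msp_mu : {measure set msp_T -> \bar R} }.

(* lebS R n : the space R^(n+1) = (...((R * R) * R) ... * R) with the
   (iterated) product of one-dimensional Lebesgue measures. *)
Fixpoint lebS (R : realType) (n : nat) : msp R :=
  match n with
  | 0 => @MSp R _ (measurableTypeR R) (@lebesgue_measure R)
  | n'.+1 => let P := lebS R n' in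
     @MSp R _ (msp_T P * measurableTypeR R)%type
       (product_measure1 (msp_mu P) (@lebesgue_measure R))
  end.

Fixpoint coord (R : realType) (n : nat) : msp_T (lebS R n) -> nat -> R :=
  match n return msp_T (lebS R n) -> nat -> R with
  | 0 => fun x _ => (x : R)
  | n'.+1 => fun x i =>
      if (i < n'.+1)%N then coord (n := n') x.1 i else (x.2 : R)
  end.

Definition toRow (R : realType) (n : nat) (x : msp_T (lebS R n)) : 'rV[R]_n.+1 :=
  \row_(i < n.+1) coord x i.

Fixpoint iterD (R : realType) (V : normedModType R) (vs : seq V) (f : V -> R)
  : V -> R :=
  match vs with
  | [::] => f
  | v :: vs' => fun x => 'D_v (iterD vs' f) x
  end.

Definition smooth (R : realType) (V : normedModType R) (f : V -> R) : Prop :=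
  forall vs : seq V,
    continuous (iterD vs f) /\ (forall (v x : V), derivable (iterD vs f) x v).

Section Kernel.
Context (R : realType).

Definition g1 (beta : R) (r : R) : R := r `^ beta * sin (ln r).
Definition g2 (beta : R) (r : R) : R := r `^ beta * cos (ln r).

Definition Wmat (beta r : R) : 'M[R]_2 :=
  \matrix_(i < 2, j < 2)
    if i == 0 then (if j == 0 then g1 beta r else g2 beta r)
    else (if j == 0 then derive1 (g1 beta) r else derive1 (g2 beta) r).

Definition Dmat (delta : R) : 'M[R]_2 :=
  \matrix_(i < 2, j < 2) (if i == j then (if i == 0 then 1 else delta) else 0).

Definition Amat (beta m0 r : R) : 'M[R]_2 := invmx (Dmat m0) *m Wmat beta r.

(* action of M (x) Id_d on R^{2d} = R^d x R^d, written in blocks *)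
Definition tens_act (d : nat) (M : 'M[R]_2) (u : 'rV[R]_(d + d)) : 'rV[R]_(d + d) :=
  row_mx (M 0 0 *: lsubmx u + M 0 1 *: rsubmx u)
         (M 1 0 *: lsubmx u + M 1 1 *: rsubmx u).

Definition c0 (d : nat) : R := (-1) ^+ d.
Definition QQ (d : nat) (beta : R) : R := (2 * beta - 1) * d%:R + 1.

(* K_r(u0,u1,u2), with u = (u0, u1, u2) in R^{1+2d} = 'rV_(1 + (d + d)) *)
Definition Kr (d : nat) (beta : R) (psi : 'rV[R]_(1 + (d + d)) -> R)
    (r : R) (u : 'rV[R]_(1 + (d + d))) : R :=
  let u0 := lsubmx u 0 0 in
  let u12 := rsubmx u in
  if u0 == 0 then 0 else
  (c0 d)^-1 * r `^ (- QQ d beta) * (u0 / r) ^+ d *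
    psi (row_mx (u0 / r)%:M (tens_act (invmx (Amat beta (u0 / r) r)) u12)).

Definition in_unit_ball (d : nat) (v : 'rV[R]_d) : Prop := \sum_(i < d) v 0 i ^+ 2 < 1.

Definition supp_box (d : nat) : set 'rV[R]_(1 + (d + d)) :=
  [set u | -2 < lsubmx u 0 0 < -1 /\ in_unit_ball (lsubmx (rsubmx u))
                                  /\ in_unit_ball (rsubmx (rsubmx u))].

(* 1/theta for theta in [1, +oo] (1/+oo = 0) *)
Definition inv_exponent (theta : \bar R) : R :=
  match theta with x%:E => x^-1 | _ => 0 end.

End Kernel.

From Pilot Require Import Defs.
From HB Require Import structures.
From mathcomp Require Import all_boot all_order all_algebra.
From mathcomp Require Import all_classical all_reals all_analysis.
From mathcomp Require Import measurable_realfun lebesgue_integral_fubini ess_sup_inf.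
From mathcomp Require Import ring lra.
Import Order.TTheory GRing.Theory Num.Theory.
Import numFieldNormedType.Exports.
Local Open Scope classical_set_scope.
Local Open Scope ring_scope.

(* On the support of [K_r] one has [m := u0 / r] in (-2, -1) and
   [(u1, u2) = (A_m(r) ⊗ Id) v] with [v] in the product of two unit balls.
   For [1 <= |m|] the first row of [A_m(r)] is [O(r^beta)] and the second one
   [O(r^(beta-1))], so the support of [K_r] lies in a box of volume
   [~ r * r^(beta d) * r^((beta-1) d) = r^Q], on which [|K_r| <~ r^-Q].
   Hence [||K_r||_theta <~ r^-Q * (r^Q)^(1/theta)].  Recovering [(u1, u2)] from
   [v] uses that [det A_m(r) = - r^(2 beta - 1) / m] does not vanish. *)

Section Lnorm_indic.
Context {d} {T : measurableType d} {R : realType}.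
Variable mu : {measure set T -> \bar R}.

(* [K_r] is never shown to be measurable, hence this variant of [ge0_le_integral]. *)
Lemma ge0_le_integral_nonmeasurable (f g : T -> \bar R) :
  (forall x, 0 <= f x)%E -> (forall x, f x <= g x)%E ->
  (\int[mu]_x f x <= \int[mu]_x g x)%E.
Proof.
move=> f0 fg; have g0 x : (0 <= g x)%E := le_trans (f0 x) (fg x).
rewrite !ge0_integralTE//; apply: ereal_sup_le => _ [h hf <-].
by exists h => //= x; exact: le_trans (hf x) (fg x).
Qed.

Section dominated_by_indic.
Context {A : set T} {B V : R} {f : T -> R}.
Hypotheses (mA : measurable A) (muA : mu A = V%:E) (B_ge0 : 0 <= B).
Hypothesis fB : forall x, `|f x| <= B * \1_A x.

Lemma integral_powR_le_indic (p : R) : 0 < p ->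
  (\int[mu]_x (`|(f x)%:E| `^ p) <= (B `^ p * V)%:E)%E.
Proof.
move=> p_gt0; have -> : ((B `^ p * V)%:E = \int[mu]_x (B `^ p * \1_A x)%:E)%E.
  rewrite (integralZl_indic _ (fun=> A)) //; last first.
    by move=> /lt_le_trans /(_ (powR_ge0 B p)); rewrite ltxx.
  by rewrite integral_indic // setIT muA EFinM.
apply: ge0_le_integral_nonmeasurable => x; first exact: poweR_ge0.
rewrite abse_EFin poweR_EFin lee_fin.
have := fB x; rewrite indicE; case: (x \in A); rewrite ?mulr1 ?mulr0 => fxB.
  by apply: ge0_ler_powR; rewrite ?nnegrE // ltW.
have /eqP -> : `|f x| == 0 by rewrite eq_le fxB normr_ge0.
by rewrite powR0 // gt_eqF.
Qed.

Lemma Lnorm_le_indic {p : \bar R} : (0 < p)%E ->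
  (Lnorm mu p (EFin \o f) <= (B * V `^ inv_exponent p)%:E)%E.
Proof.
rewrite unlock; case: p => [p||//] /= p_gt0; last first.
  rewrite powRr0 mulr1; case: ifPn => _; last by rewrite lee_fin.
  apply/ess_supP/nearW => x /=; rewrite lee_fin (le_trans (fB x)) //.
  by rewrite ler_piMr // indicE lern1 leq_b1.
rewrite lte_fin in p_gt0.
have V_ge0 : 0 <= V by rewrite -lee_fin -muA.
have in_ge0 (x : \bar R) : (0 <= x)%E -> (x \in `[0, +oo])%E.
  by move=> x0; rewrite in_itv /= leey andbT.
have int_ge0 : (0 <= \int[mu]_x (`|(f x)%:E| `^ p))%E.
  by apply: integral_ge0 => x _; exact: poweR_ge0.
have BV_ge0 : (0 <= (B `^ p * V)%:E)%E by rewrite lee_fin mulr_ge0 ?powR_ge0.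
have pV_ge0 : 0 <= p^-1 by rewrite invr_ge0 ltW.
apply: (le_trans (gt0_ler_poweR pV_ge0 (in_ge0 _ int_ge0) (in_ge0 _ BV_ge0)
  (integral_powR_le_indic p p_gt0))).
by rewrite poweR_EFin powRM ?powR_ge0 // -powRrM mulfV ?gt_eqF // powRr1.
Qed.

End dominated_by_indic.

End Lnorm_indic.

Section coord_box.
Context {R : realType}.

Definition coord_box (n : nat) (c : nat -> R) : set (msp_T (lebS R n)) :=
  [set x | forall j, (j <= n)%N -> `|Defs.coord x j| <= c j].

Lemma coord_boxP n (c : nat -> R) (x : msp_T (lebS R n)) :
  (forall i : 'I_n.+1, `|toRow x 0 i| <= c i) -> coord_box n c x.
Proof. by move=> xc j jn; have := xc (Ordinal (jn : (j < n.+1)%N)); rewrite mxE. Qed.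

Lemma normr_le_closed_ball (c : R) : 0 < c -> [set y : R | `|y| <= c] = closed_ball 0 c.
Proof.
move=> c_gt0; rewrite closed_ballE // /closed_ball_.
by apply/seteqP; split => y /=; rewrite sub0r normrN.
Qed.

Lemma measurable_normr_le (c : R) : 0 < c -> measurable [set y : R | `|y| <= c].
Proof.
by move=> c_gt0; rewrite normr_le_closed_ball //; exact: measurable_closed_ball.
Qed.

Lemma coord_box0 (c : nat -> R) : coord_box 0 c = [set y : R | `|y| <= c 0%N].
Proof. by apply/seteqP; split => [y /(_ 0%N isT) //|y yc [|]]. Qed.

Lemma coord_boxS n (c : nat -> R) :
  coord_box n.+1 c = coord_box n c `*` [set y : R | `|y| <= c n.+1].
Proof.
apply/seteqP; split => -[x y] /=.
  move=> xyc; split; last by have := xyc n.+1 (leqnn _); rewrite /= ltnn.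
  by move=> j jn; have := xyc j (leqW jn); rewrite /= ltnS jn.
move=> [xc yc] j; rewrite leq_eqVlt => /predU1P[-> /=|jn /=]; first by rewrite ltnn.
by rewrite jn; apply: xc.
Qed.

Lemma measurable_coord_box n (c : nat -> R) :
  (forall j, 0 < c j) -> measurable (coord_box n c).
Proof.
move=> c_gt0; elim: n => [|n IHn].
  by rewrite coord_box0; exact: measurable_normr_le.
by rewrite coord_boxS; apply: measurableX => //; exact: measurable_normr_le.
Qed.

Lemma coord_box_measure n (c : nat -> R) : (forall j, 0 < c j) ->
  msp_mu (lebS R n) (coord_box n c) = (\prod_(j < n.+1) (c j *+ 2))%:E.
Proof.
move=> c_gt0; elim: n => [|n IHn].
  rewrite coord_box0 normr_le_closed_ball //= lebesgue_measure_closed_ball ?ltW //.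
  by rewrite big_ord1.
rewrite [LHS]/= coord_boxS product_measure1E;
  [|exact: measurable_coord_box | exact: measurable_normr_le].
rewrite IHn normr_le_closed_ball //= lebesgue_measure_closed_ball ?ltW //.
by rewrite -EFinM [in RHS]big_ord_recr.
Qed.

Definition block_radius (d : nat) (a0 a1 a2 : R) (j : nat) : R :=
  if j == 0%N then a0 else if (j <= d)%N then a1 else a2.

Lemma prod_block_radius d a0 a1 a2 :
  \prod_(j < (d + d).+1) (block_radius d a0 a1 a2 j *+ 2) =
  a0 *+ 2 * (a1 *+ 2 * (a2 *+ 2)) ^+ d.
Proof.
rewrite big_ord_recl big_split_ord /=.
rewrite (eq_bigr (fun=> a1 *+ 2)); last by move=> i _; rewrite /block_radius /= ltn_ord.
rewrite [X in _ * (_ * X)](eq_bigr (fun=> a2 *+ 2)); last first.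
  by move=> i _; rewrite /block_radius /= ltnNge leq_addr.
by rewrite !prodr_const !card_ord exprMn.
Qed.

Lemma row_block_radius d (u : 'rV[R]_(1 + (d + d))) a0 a1 a2 :
  `|lsubmx u 0 0| <= a0 -> (forall k, `|lsubmx (rsubmx u) 0 k| <= a1) ->
  (forall k, `|rsubmx (rsubmx u) 0 k| <= a2) ->
  forall i, `|u 0 i| <= block_radius d a0 a1 a2 i.
Proof.
move=> u0 u1 u2 i; rewrite /block_radius.
case: (splitP i) => [j ij|k ik].
  have -> : i = lshift _ j by exact: val_inj.
  by move: u0; rewrite (ord1 j) mxE.
have -> : i = rshift 1 k by exact: val_inj.
case: (splitP k) => [j kj|j kj].
  have -> : k = lshift _ j by exact: val_inj.
  by move: (u1 j); rewrite !mxE.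
have -> : k = rshift _ j by exact: val_inj.
by move: (u2 j); rewrite !mxE.
Qed.

End coord_box.

Section mx2.
Context {R : realType}.
Implicit Types M N : 'M[R]_2.

Lemma mx2P M N :
  M 0 0 = N 0 0 -> M 0 1 = N 0 1 -> M 1 0 = N 1 0 -> M 1 1 = N 1 1 -> M = N.
Proof.
have ord2 (i : 'I_2) : i = 0 \/ i = 1.
  by case: i => [[|[|//]] ?]; [left | right]; exact: val_inj.
move=> e00 e01 e10 e11; apply/matrixP => i j.
by case: (ord2 i) => ->; case: (ord2 j) => ->.
Qed.

Lemma mulmx2E M N i j : (M *m N) i j = M i 0 * N 0 j + M i 1 * N 1 j.
Proof.
rewrite !mxE big_ord_recr big_ord1 /=.
by congr (M i _ * N _ j + M i _ * N _ j); exact: val_inj.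
Qed.

Lemma unitmx2 M : M 0 0 * M 1 1 - M 0 1 * M 1 0 != 0 -> M \in unitmx.
Proof.
move=> det_neq0; set adj := \matrix_(i < 2, j < 2)
  (if i == 0 then (if j == 0 then M 1 1 else - M 0 1)
   else (if j == 0 then - M 1 0 else M 0 0)).
have /mulmx1_unit[] // : M *m ((M 0 0 * M 1 1 - M 0 1 * M 1 0)^-1 *: adj) = 1%:M.
by apply: mx2P; rewrite !mulmx2E !mxE /=; field.
Qed.

Lemma invmx_Dmat (m : R) : m != 0 -> invmx (Dmat m) = Dmat m^-1.
Proof.
move=> m0; have DV : Dmat m *m Dmat m^-1 = 1%:M.
  by apply: mx2P; rewrite !mulmx2E !mxE /=; field.
have [Du _] := mulmx1_unit DV.
by rewrite -[RHS]mul1mx -(mulVmx Du) -mulmxA DV mulmx1.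
Qed.

Lemma tens_actM d M N (u : 'rV[R]_(d + d)) :
  tens_act M (tens_act N u) = tens_act (M *m N) u.
Proof.
rewrite /tens_act row_mxKl row_mxKr !mulmx2E; congr row_mx;
by rewrite !scalerDr !scalerA !scalerDl addrACA.
Qed.

Lemma tens_act1 d (u : 'rV[R]_(d + d)) : tens_act 1%:M u = u.
Proof. by rewrite /tens_act !mxE /= !scale1r !scale0r addr0 add0r hsubmxK. Qed.

Lemma normr_tens_act_le d M (v : 'rV[R]_(d + d)) (i : 'I_2) k :
  `|lsubmx v 0 k| <= 1 -> `|rsubmx v 0 k| <= 1 ->
  `|(M i 0 *: lsubmx v + M i 1 *: rsubmx v) 0 k| <= `|M i 0| + `|M i 1|.
Proof.
rewrite !mxE => v1 v2; rewrite (le_trans (ler_normD _ _)) // !normrM.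
by rewrite lerD // ler_piMr.
Qed.

End mx2.

Section kernel_matrix.
Context {R : realType} {beta r : R}.
Hypothesis r_gt0 : 0 < r.

Lemma powR_subr1 : r `^ (beta - 1) = r `^ beta / r.
Proof.
by rewrite powRB ?powRr1 ?(ltW r_gt0) // (gt_eqF r_gt0) implybT.
Qed.

Lemma derive1_g1 :
  derive1 (g1 beta) r = r `^ beta / r * (beta * sin (ln r) + cos (ln r)).
Proof.
have Dpow : is_derive r 1 (fun x : R => x `^ beta) (beta * r `^ (beta - 1)).
  exact: is_derive1_powR.
have Dsin : is_derive r 1 (sin \o @ln R) (cos (ln r) * r^-1).
  exact: is_derive1_comp (is_derive_sin _) (is_derive1_ln r_gt0).
have -> : g1 beta = (fun x => x `^ beta) * (sin \o @ln R) by [].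
rewrite derive1E (derive_val (is_derive := is_deriveM Dpow Dsin)) powR_subr1 /=.
by rewrite /GRing.scale /=; field; rewrite gt_eqF.
Qed.

Lemma derive1_g2 :
  derive1 (g2 beta) r = r `^ beta / r * (beta * cos (ln r) - sin (ln r)).
Proof.
have Dpow : is_derive r 1 (fun x : R => x `^ beta) (beta * r `^ (beta - 1)).
  exact: is_derive1_powR.
have Dcos : is_derive r 1 (cos \o @ln R) (- sin (ln r) * r^-1).
  exact: is_derive1_comp (is_derive_cos _) (is_derive1_ln r_gt0).
have -> : g2 beta = (fun x => x `^ beta) * (cos \o @ln R) by [].
rewrite derive1E (derive_val (is_derive := is_deriveM Dpow Dcos)) powR_subr1 /=.
by rewrite /GRing.scale /=; field; rewrite gt_eqF.
Qed.

Lemma Wmat_unit : Wmat beta r \in unitmx.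
Proof.
apply: unitmx2; rewrite !mxE /= derive1_g1 derive1_g2 /g1 /g2.
set P := r `^ beta; set s := sin (ln r); set c := cos (ln r).
have -> : P * s * (P / r * (beta * c - s)) - P * c * (P / r * (beta * s + c)) =
          - (P * P / r) * (c ^+ 2 + s ^+ 2) by ring.
by rewrite cos2Dsin2 mulr1 oppr_eq0 !mulf_neq0 ?invr_eq0 ?gt_eqF ?powR_gt0.
Qed.

Lemma Amat_unit (m : R) : m != 0 -> Amat beta m r \in unitmx.
Proof.
move=> m0; rewrite unitmx_mul Wmat_unit andbT unitmx_inv.
by apply: unitmx2; rewrite !mxE /= mulr0 subr0 mul1r.
Qed.

Lemma Amat_entries (m : R) : m != 0 ->
  [/\ Amat beta m r 0 0 = g1 beta r, Amat beta m r 0 1 = g2 beta r,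
      Amat beta m r 1 0 = m^-1 * derive1 (g1 beta) r &
      Amat beta m r 1 1 = m^-1 * derive1 (g2 beta) r].
Proof.
move=> m0; rewrite /Amat invmx_Dmat // !mulmx2E !mxE /=.
by rewrite !mul0r !mul1r !addr0 !add0r.
Qed.

Lemma normr_Amat_le (m : R) : 0 <= beta -> 1 <= `|m| ->
  [/\ `|Amat beta m r 0 0| + `|Amat beta m r 0 1| <= 2 * r `^ beta &
      `|Amat beta m r 1 0| + `|Amat beta m r 1 1| <=
        2 * ((beta + 1) * (r `^ beta / r))].
Proof.
move=> beta_ge0 m_ge1; have m0 : m != 0 by rewrite -normr_gt0 (lt_le_trans ltr01).
have [-> -> -> ->] := Amat_entries m m0.
rewrite derive1_g1 derive1_g2 /g1 /g2.
have P0 : 0 <= r `^ beta := powR_ge0 _ _.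
have Pr0 : 0 <= r `^ beta / r by rewrite divr_ge0 // ltW.
have mV : `|m^-1| <= 1 by rewrite normrV ?unitfE // invf_le1 // (lt_le_trans ltr01).
have [s1 c1] := (sin_max (ln r), cos_max (ln r)).
have lin_le (a b : R) : `|a| <= 1 -> `|b| <= 1 -> `|beta * a + b| <= beta + 1.
  move=> a1 b1; rewrite (le_trans (ler_normD _ _)) // normrM ger0_norm //.
  by rewrite lerD // ler_piMr.
have entry1_le (a b : R) : `|a| <= 1 -> `|b| <= 1 ->
    `|m^-1 * (r `^ beta / r * (beta * a + b))| <= (beta + 1) * (r `^ beta / r).
  move=> a1 b1; rewrite normrM -[X in _ <= X]mul1r ler_pM //.
  by rewrite normrM (ger0_norm Pr0) mulrC ler_wpM2r // lin_le.
rewrite !mulr_natl !mulr2n; split.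
  by rewrite !normrM (ger0_norm P0) lerD // ler_piMr.
by rewrite lerD // entry1_le // normrN.
Qed.

End kernel_matrix.

Lemma in_unit_ball_normr_le1 (R : realType) n (w : 'rV[R]_n) i :
  in_unit_ball w -> `|w 0 i| <= 1.
Proof.
rewrite /in_unit_ball => w1; have wi1 : w 0 i ^+ 2 <= 1.
  apply: le_trans (ltW w1); rewrite (bigD1 i) //= lerDl.
  by apply: sumr_ge0 => k _; exact: sqr_ge0.
by rewrite -(expr_le1 (n := 2)) ?normr_ge0 // real_normK ?num_real.
Qed.

Definition kernel_radius {R : realType} (d : nat) (beta r : R) : nat -> R :=
  block_radius d (2 * r) (2 * r `^ beta) (2 * ((beta + 1) * (r `^ beta / r))).

Section kernel.
Variables (R : realType) (d : nat) (beta : R) (psi : 'rV[R]_(1 + (d + d)) -> R).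
Hypothesis beta_ge0 : 0 <= beta.
Hypothesis psi_supp : forall u, psi u != 0 -> supp_box u.

Lemma kernel_radius_gt0 r j : 0 < r -> 0 < kernel_radius d beta r j.
Proof.
move=> r_gt0; rewrite /kernel_radius /block_radius.
by case: ifP => _; [|case: ifP => _]; rewrite !mulr_gt0 ?powR_gt0 ?invr_gt0 // ltr_wpDl.
Qed.

Lemma powR_QQ r : 0 < r -> r `^ QQ d beta = r * (r `^ beta ^+ 2 / r) ^+ d.
Proof.
move=> r_gt0; have r_neq0 : r != 0 by rewrite gt_eqF.
rewrite /QQ powRD ?r_neq0 ?implybT // powRr1 ?ltW // mulrC; congr (_ * _).
rewrite powRrM powR_mulrn ?powR_ge0 //; congr (_ ^+ _).
rewrite powRB ?r_neq0 ?implybT // powRr1 ?ltW //.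
by rewrite (_ : 2 * beta = beta + beta) ?powRD ?r_neq0 ?implybT ?expr2 //; ring.
Qed.

Lemma kernel_box_measure r : 0 < r ->
  msp_mu (lebS R (d + d)) (coord_box (d + d) (kernel_radius d beta r)) =
  (4 * (16 * (beta + 1)) ^+ d * r `^ QQ d beta)%:E.
Proof.
move=> r_gt0; rewrite coord_box_measure; last by move=> j; exact: kernel_radius_gt0.
rewrite prod_block_radius powR_QQ //; congr EFin.
rewrite [X in X ^+ d](_ : _ = 16 * (beta + 1) * (r `^ beta ^+ 2 / r)); last by ring.
by rewrite !exprMn; ring.
Qed.

Lemma normr_c0V : `|(c0 R d)^-1| = 1.
Proof. by rewrite /c0 -exprVn normrX normrV ?unitrN1 // normrN1 invr1 expr1n. Qed.

Lemma normr_Kr_le M r u : (forall u, `|psi u| <= M) ->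
  `|Kr beta psi r u| <= M * r `^ (- QQ d beta) * `|lsubmx u 0 0 / r| ^+ d.
Proof.
move=> psiM; have M0 : 0 <= M := le_trans (normr_ge0 _) (psiM 0).
rewrite /Kr; case: ifPn => _; first by rewrite normr0 !mulr_ge0 ?powR_ge0.
rewrite 3!normrM normr_c0V mul1r (ger0_norm (powR_ge0 _ _)) normrX.
by rewrite [X in X <= _]mulrC mulrA ler_wpM2r ?exprn_ge0 // ler_wpM2r ?powR_ge0.
Qed.

Lemma Kr_neq0_support r u : 0 < r -> Kr beta psi r u != 0 ->
  [/\ `|lsubmx u 0 0 / r| < 2,
      forall k, `|lsubmx (rsubmx u) 0 k| <= 2 * r `^ beta &
      forall k, `|rsubmx (rsubmx u) 0 k| <= 2 * ((beta + 1) * (r `^ beta / r))].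
Proof.
move=> r_gt0; rewrite /Kr; case: ifPn => [_|_]; first by rewrite eqxx.
set m := _ / r; set v := tens_act _ _.
have [->|/psi_supp [m_itv [v1 v2]]] := eqVneq (psi (row_mx m%:M v)) 0.
  by rewrite mulr0 eqxx.
rewrite row_mxKl row_mxKr mxE eqxx mulr1n in m_itv v1 v2 => _.
have m_ge1 : 1 <= `|m| by rewrite ltr0_norm; lra.
have m_neq0 : m != 0 by rewrite -normr_gt0; lra.
have u12E : rsubmx u = tens_act (Amat beta m r) v.
  by rewrite /v tens_actM mulmxV ?Amat_unit // tens_act1.
have [A0 A1] := normr_Amat_le r_gt0 _ beta_ge0 m_ge1.
split; first by rewrite ltr0_norm; lra.
- move=> k; rewrite u12E /tens_act row_mxKl; apply: le_trans A0.
  by apply: (normr_tens_act_le _ _ _ 0); exact: in_unit_ball_normr_le1.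
- move=> k; rewrite u12E /tens_act row_mxKr; apply: le_trans A1.
  by apply: (normr_tens_act_le _ _ _ 1); exact: in_unit_ball_normr_le1.
Qed.

Lemma Kr_le_indic M r (x : msp_T (lebS R (d + d))) : 0 < r ->
  (forall u, `|psi u| <= M) ->
  `|Kr beta psi r (toRow x)| <=
    M * 2 ^+ d * r `^ (- QQ d beta) * \1_(coord_box (d + d) (kernel_radius d beta r)) x.
Proof.
move=> r_gt0 psiM; have M0 : 0 <= M := le_trans (normr_ge0 _) (psiM 0).
have [->|] := eqVneq (Kr beta psi r (toRow x)) 0.
  by rewrite normr0 !mulr_ge0 ?powR_ge0 ?exprn_ge0 // indicE ler0n.
move=> /(Kr_neq0_support _ _ r_gt0)[u0_lt2 u1 u2]; rewrite indicE mem_set ?mulr1.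
  rewrite (le_trans (normr_Kr_le _ _ _ psiM)) // [X in _ <= X]mulrAC.
  by rewrite ler_wpM2l ?mulr_ge0 ?powR_ge0 // lerXn2r ?nnegrE // ltW.
apply: coord_boxP; apply: row_block_radius => //.
rewrite -(divfK (lt0r_neq0 r_gt0) (lsubmx _ 0 0)) normrM (gtr0_norm r_gt0).
by rewrite ler_wpM2r ?ltW.
Qed.

End kernel.

Lemma compact_support_bounded (R : realType) (T : topologicalType) (f : T -> R) :
  continuous f -> compact (closure [set x | f x != 0]) ->
  exists M, forall x, `|f x| <= M.
Proof.
move=> f_cont f_cpt.
have /compact_bounded/pinfty_ex_gt0[M M_gt0 fM] :=
  continuous_compact (continuous_subspaceT f_cont) f_cpt.
exists M => x; have [->|fx_neq0] := eqVneq (f x) 0; first by rewrite normr0 ltW.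
by apply: fM; exists x => //; exact: subset_closure.
Qed.

Lemma inv_exponent_itv (R : realType) (theta : \bar R) :
  (1 <= theta)%E -> 0 <= inv_exponent theta <= 1.
Proof.
case: theta => [t||] //= t_ge1; rewrite ?lexx ?ler01 //.
rewrite lee_fin in t_ge1.
by rewrite invr_ge0 invf_le1 ?(lt_le_trans ltr01) // (le_trans ler01).
Qed.

Lemma powR_scale_le (R : realType) (K C Q r s : R) :
  0 <= K -> 1 <= C -> 0 < r -> 0 <= s <= 1 ->
  K * r `^ (- Q) * (C * r `^ Q) `^ s <= K * C * r `^ (Q * (s - 1)).
Proof.
move=> K0 C_ge1 r_gt0 /andP[s0 s1]; have C0 : 0 <= C := le_trans ler01 C_ge1.
rewrite powRM ?powR_ge0 // -powRrM.
have -> : r `^ (Q * (s - 1)) = r `^ (- Q) * r `^ (Q * s).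
  by rewrite -powRD ?(gt_eqF r_gt0) ?implybT //; congr (_ `^ _); ring.
rewrite (_ : _ * (_ * _) = K * r `^ (- Q) * r `^ (Q * s) * C `^ s); last by ring.
rewrite (_ : _ * (_ * _) = K * r `^ (- Q) * r `^ (Q * s) * C); last by ring.
by rewrite ler_wpM2l ?mulr_ge0 ?powR_ge0 // ler1_powR.
Qed.

Theorem corollary2p6 (R : realType) (d : nat) (beta : R) (theta : \bar R)
    (psi : 'rV[R]_(1 + (d + d)) -> R) :
  1 < beta ->
  (1 <= theta)%E ->
  smooth psi ->
  (forall u, 0 <= psi u) ->
  (\int[msp_mu (lebS R (d + d))]_x (psi (toRow x))%:E = 1)%E ->
  compact (closure [set u | psi u != 0]) ->
  closure [set u | psi u != 0] `<=` @supp_box R d ->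
  exists C : R, forall r : R, 0 < r ->
    (Lnorm (msp_mu (lebS R (d + d))) theta
        (fun x => (@Kr R d beta psi r (toRow x))%:E)
      <= (C * r `^ (@QQ R d beta * (inv_exponent theta - 1)))%:E)%E.
Proof.
move=> beta_gt1 theta_ge1 psi_smooth _ _ psi_cpt psi_supp.
have [M psiM] : exists M, forall u, `|psi u| <= M.
  by apply: compact_support_bounded psi_cpt; case: (psi_smooth [::]).
have M0 : 0 <= M := le_trans (normr_ge0 _) (psiM 0).
have beta_ge0 : 0 <= beta by rewrite ltW // (lt_trans ltr01).
have supp u : psi u != 0 -> supp_box u by move=> ?; apply/psi_supp/subset_closure.
exists (M * 2 ^+ d * (4 * (16 * (beta + 1)) ^+ d)) => r r_gt0.
have radius_gt0 j : 0 < kernel_radius d beta r j by exact: kernel_radius_gt0.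
have B_ge0 : 0 <= M * 2 ^+ d * r `^ (- QQ d beta).
  by rewrite !mulr_ge0 ?powR_ge0 ?exprn_ge0.
have Kr_le x : `|Kr beta psi r (toRow x)| <=
    M * 2 ^+ d * r `^ (- QQ d beta) * \1_(coord_box (d + d) (kernel_radius d beta r)) x.
  exact: Kr_le_indic.
have theta_gt0 : (0 < theta)%E by apply: lt_le_trans theta_ge1.
apply: (le_trans (Lnorm_le_indic _ (measurable_coord_box _ _ radius_gt0)
  (kernel_box_measure R d beta beta_ge0 r r_gt0) B_ge0 Kr_le theta_gt0)).
rewrite lee_fin powR_scale_le ?inv_exponent_itv ?mulr_ge0 ?exprn_ge0 //.
by rewrite -[1]mul1r ler_pM ?exprn_ege1 //; lra.
Qed.
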